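(* For every backward trie $\mathsf{T}_b$ with $n\ge 3$ nodes, the suffix tree $\mathsf{STree}(\mathsf{T}_b)$ has at most $2n-3$ nodes and at most $2n-4$ edges, independently of the alphabet size.
   Context: An alphabet $\Sigma$ is a finite ordered set of characters. A forward trie $\mathsf{T}_f$ is a rooted tree with $n$ nodes in which every edge is directed from parent to child and labeled by a single character of $\Sigma$, such that the edges leaving any node carry pairwise distinct labels. The backward trie $\mathsf{T}_b$ is obtained from $\mathsf{T}_f$ by reversing the direction of every edge while keeping its label; it has the same $n$ nodes and the same root $r$. For nodes $u,v$ with $u$ an ancestor of $v$ (possibly $u=v$), $\mathrm{str}_b(v,u)$ is the string of labels read along the reversed (upward) path from $v$ to $u$. Define $\mathrm{Suffix}(\mathsf{T}_b)=\{\mathrm{str}_b(v,r): v \text{ a node}\}$. For a finite set $S$ of strings, its compact tree is obtained from the trie of all prefixes of strings in $S$ (one node per prefix, the root being the empty string, an edge labeled $a$ from $X$ to $Xa$) by deleting every non-root node that has exactly one child and merging its two incident edges into one edge labeled by the concatenation of their labels. The suffix tree $\mathsf{STree}(\mathsf{T}_b)$ is the compact tree of $\mathrm{Suffix}(\mathsf{T}_b)$. *)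

From mathcomp Require Import all_boot.
Set Implicit Arguments. Unset Strict Implicit. Unset Printing Implicit Defensive.

(* A trie on the finite node type T (n = #|T| nodes) with root r is given by a
   parent map par (with par r = r by convention) and a labelling lab : the
   forward edge par v -> v (v <> r) carries label lab v.  Reversing edges
   (backward trie) keeps the same nodes, root and labels. *)

Definition is_forward_trie (Sigma T : finType) (r : T) (par : T -> T)
    (lab : T -> Sigma) : Prop :=
  [/\ par r = r,
      (forall v : T, exists k : nat, iter k par v = r) &
      (forall u v : T, u != r -> v != r -> par u = par v -> lab u = lab v -> u = v)].

(* str_b(v, r): labels read upward from v to the root.  The fuel #|T| is
   enough since every node has depth < #|T| in a trie. *)
Fixpoint strb_fuel (Sigma T : finType) (r : T) (par : T -> T) (lab : T -> Sigma)
    (k : nat) (v : T) : seq Sigma :=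
  match k with
  | 0 => [::]
  | k'.+1 => if v == r then [::] else lab v :: strb_fuel r par lab k' (par v)
  end.

Definition strb (Sigma T : finType) (r : T) (par : T -> T) (lab : T -> Sigma)
    (v : T) : seq Sigma := strb_fuel r par lab #|T| v.

Definition suffixes_b (Sigma T : finType) (r : T) (par : T -> T)
    (lab : T -> Sigma) : seq (seq Sigma) :=
  undup [seq strb r par lab v | v <- enum T].

Section Compact.
Variable Sigma : eqType.

Definition prefixes_of (s : seq Sigma) : seq (seq Sigma) :=
  [seq take i s | i <- iota 0 (size s).+1].

Definition trie_nodes (S : seq (seq Sigma)) : seq (seq Sigma) :=
  undup (flatten (map prefixes_of S)).

Definition trie_nchildren (S : seq (seq Sigma)) (X : seq Sigma) : nat :=
  count (fun Y => (size Y == (size X).+1) && (take (size X) Y == X)) (trie_nodes S).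

Definition ctree_nodes (S : seq (seq Sigma)) : seq (seq Sigma) :=
  [seq X <- trie_nodes S | (X == [::]) || (trie_nchildren S X != 1)].

Definition sprefix (X Y : seq Sigma) : bool := prefix X Y && (X != Y).

Definition ctree_edges (S : seq (seq Sigma)) : seq (seq Sigma * seq Sigma) :=
  [seq p <- [seq (X, Y) | X <- ctree_nodes S, Y <- ctree_nodes S]
     | sprefix p.1 p.2 &&
       ~~ has (fun Z => sprefix p.1 Z && sprefix Z p.2) (ctree_nodes S)].
End Compact.

From mathcomp Require Import all_boot.
From mathcomp Require Import zify.
Set Implicit Arguments. Unset Strict Implicit. Unset Printing Implicit Defensive.

(* Let S be the set of suffixes of the backward trie; it contains
   the empty string and has at most n elements.  In the prefix trie P of S,
   every leaf is a string of S, and the empty string is not a leaf, so there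
   are at most n - 1 leaves.  Counting children (every non-root node of P has
   exactly one parent) shows that the nodes of P that do not have exactly one
   child number at most 2 #leaves - 1; the compact tree keeps those nodes plus
   possibly the root.  If the root of P branches, this gives at most 2n - 3
   nodes.  If the root has a single child, then, since every letter of a
   suffix starts some suffix, every string of S is a power of one letter;
   then P is a path with one leaf and the compact tree has at most 2 nodes.
   Finally every compact edge is determined by its lower end, which is never
   the root, so there are fewer edges than nodes. *)

Section PrefixTrie.
Variable Sigma : eqType.
Variable S : seq (seq Sigma).
Local Notation P := (trie_nodes S).
Local Notation nch := (trie_nchildren S).
Local Notation K := (ctree_nodes S).

Definition child (X Y : seq Sigma) : bool :=
  (size Y == (size X).+1) && (take (size X) Y == X).

Lemma nchildrenE X : nch X = count (child X) P.
Proof. by []. Qed.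

Lemma trie_nodesP X :
  reflect (exists2 s, s \in S & exists2 i, i <= size s & X = take i s) (X \in P).
Proof.
rewrite /trie_nodes mem_undup; apply: (iffP flattenP).
- move=> [ps /mapP [s sS ->]] /mapP [i]; rewrite mem_iota add0n ltnS => ? ->.
  by exists s => //; exists i.
- move=> [s sS [i lei ->]]; exists (prefixes_of s); first by apply/mapP; exists s.
  by apply/mapP; exists i => //; rewrite mem_iota add0n ltnS.
Qed.

Lemma trie_nodes_take X j : X \in P -> take j X \in P.
Proof.
move=> /trie_nodesP [s sS [i lei ->]]; apply/trie_nodesP; exists s => //.
by exists (minn j i); rewrite ?geq_min ?lei ?orbT // take_min.
Qed.

Lemma trie_nodes_S s : s \in S -> s \in P.
Proof. by move=> sS; apply/trie_nodesP; exists s => //; exists (size s); rewrite ?take_size. Qed.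

Lemma uniq_trie_nodes : uniq P. Proof. exact: undup_uniq. Qed.

Lemma count_sum (T : Type) (a : pred T) (s : seq T) :
  count a s = \sum_(y <- s) nat_of_bool (a y).
Proof. by elim: s => [|x s IH]; rewrite ?big_nil ?big_cons //= IH. Qed.

Lemma count_parents Y : Y \in P -> count (fun X => child X Y) P <= (Y != [::]).
Proof.
case: Y => [|y Y] YP.
  by rewrite leqn0 -(count_pred0 P); apply/eqP/eq_count => X; rewrite /child.
apply: (@leq_trans (count (pred1 (take (size Y) (y :: Y))) P)).
  by apply: sub_count => X /andP [/eqP /= [->] /eqP ->] /=.
by rewrite count_uniq_mem ?uniq_trie_nodes //; case: (_ \in _).
Qed.

Lemma sum_nchildren : [::] \in P -> \sum_(X <- P) nch X + 1 <= size P.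
Proof.
move=> nilP.
have -> : \sum_(X <- P) nch X = \sum_(Y <- P) count (fun X => child X Y) P.
  rewrite (eq_bigr (fun X => \sum_(Y <- P) nat_of_bool (child X Y))); last first.
    by move=> X _; rewrite nchildrenE count_sum.
  by rewrite exchange_big; apply: eq_bigr => Y _; rewrite count_sum.
apply: (@leq_trans (\sum_(Y <- P) nat_of_bool (Y != [::]) + 1)).
  rewrite leq_add2r big_seq [X in _ <= X]big_seq; apply: leq_sum => Y.
  exact: count_parents.
rewrite -count_sum; have := count_predC (pred1 [::]) P.
by rewrite count_uniq_mem ?uniq_trie_nodes // nilP => <-; rewrite addnC leq_add2r.
Qed.

Lemma nchildren_pos X Y : Y \in P -> size X < size Y -> take (size X) Y = X -> 0 < nch X.
Proof.
move=> YP lt ht; rewrite nchildrenE -has_count; apply/hasP.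
exists (take (size X).+1 Y); first exact: trie_nodes_take.
by rewrite /child size_takel // eqxx take_takel // ht eqxx.
Qed.

Lemma only_child X Y Z : nch X = 1 -> Y \in P -> Z \in P ->
  child X Y -> child X Z -> Y = Z.
Proof.
move=> h1 YP ZP cY cZ; apply/eqP; apply: contraT => neYZ.
have : uniq [:: Y; Z] by rewrite /= inE neYZ.
move=> /(@uniq_leq_size _ _ [seq W <- P | child X W]) /=.
rewrite size_filter -nchildrenE h1; apply.
by move=> W; rewrite !inE mem_filter => /orP [] /eqP ->; apply/andP.
Qed.

Definition trie_leaves : seq (seq Sigma) := [seq X <- P | nch X == 0].

Lemma trie_leaves_S X : X \in trie_leaves -> X \in S.
Proof.
rewrite mem_filter => /andP [/eqP h0 /trie_nodesP [s sS [i lei eX]]].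
case: (ltnP i (size s)) => [lt|ge]; last by rewrite eX take_oversize.
have := @nchildren_pos X s (trie_nodes_S sS).
by rewrite h0 eX size_takel ?(ltnW lt) //; move=> /(_ lt erefl).
Qed.

(* Leaves are strings of S, and the root is not a leaf. *)
Lemma trie_leaves_bound : [::] \in S -> (exists2 s, s \in S & s != [::]) ->
  size trie_leaves + 1 <= size S.
Proof.
move=> nilS [s sS ne].
have root_inner : 0 < nch [::].
  by apply: (@nchildren_pos [::] s (trie_nodes_S sS)); rewrite ?take0 //; case: s ne {sS}.
have : uniq ([::] :: trie_leaves).
  by rewrite /= filter_uniq ?uniq_trie_nodes // andbT mem_filter negb_and -lt0n root_inner.
move=> /(@uniq_leq_size _ _ S) /=; rewrite addn1; apply=> X.
by rewrite inE => /orP [/eqP -> //|]; apply: trie_leaves_S.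
Qed.

Lemma nonunary_count : [::] \in P ->
  count (fun X => nch X != 1) P + 1 <= 2 * size trie_leaves.
Proof.
move=> nilP.
have pointwise : \sum_(X <- P) (nat_of_bool (nch X != 1) + 1) <=
     \sum_(X <- P) (nat_of_bool (nch X == 0) + nat_of_bool (nch X == 0) + nch X).
  by apply: leq_sum => X _; case: (nch X) => [|[|k]].
move: pointwise; rewrite !big_split /= -!count_sum sum1_size.
have := sum_nchildren nilP; rewrite /trie_leaves size_filter; lia.
Qed.

Lemma ctree_nodes_bound : [::] \in P ->
  size K + 1 <= 2 * size trie_leaves + (nch [::] == 1).
Proof.
move=> nilP; have := nonunary_count nilP; rewrite /ctree_nodes !size_filter.
case: eqP => h1.
  have := count_predUI (pred1 [::]) (fun X => nch X != 1) P.
  rewrite count_uniq_mem ?uniq_trie_nodes // nilP /=.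
  have -> : count (predU (pred1 [::]) (fun X => nch X != 1)) P =
            count (fun X => (X == [::]) || (nch X != 1)) P by apply: eq_count.
  lia.
have -> : count (fun X => (X == [::]) || (nch X != 1)) P = count (fun X => nch X != 1) P.
  by apply: eq_count => X; case: eqP => // ->; apply/esym/eqP.
lia.
Qed.

Lemma trie_leaves_power (a : Sigma) : (forall s, s \in S -> s = nseq (size s) a) ->
  size trie_leaves <= 1.
Proof.
move=> hS.
have leaf_size X Y : X \in trie_leaves -> Y \in trie_leaves -> size X <= size Y.
  move=> XL YL; rewrite leqNgt; apply/negP => lt.
  move: (XL) (YL); rewrite !mem_filter => /andP [_ XP] /andP [/eqP hY _].
  have : 0 < nch Y.
    apply: (@nchildren_pos Y X XP lt).
    by rewrite (hS _ (trie_leaves_S XL)) (hS _ (trie_leaves_S YL)) size_nseq take_nseq // ltnW.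
  by rewrite hY.
case E: trie_leaves => [|X rest] //.
have XL : X \in trie_leaves by rewrite E mem_head.
have := @uniq_leq_size _ trie_leaves [:: X] (filter_uniq _ uniq_trie_nodes).
rewrite E /=; apply=> Y YL; rewrite inE; apply/eqP.
rewrite -E in YL; rewrite (hS _ (trie_leaves_S XL)) (hS _ (trie_leaves_S YL)).
by congr nseq; apply/eqP; rewrite eqn_leq !leaf_size.
Qed.

Lemma unary_root_power :
  (forall s x, s \in S -> x \in s -> exists t, x :: t \in S) ->
  (exists2 s, s \in S & s != [::]) -> nch [::] = 1 ->
  exists a, forall s, s \in S -> s = nseq (size s) a.
Proof.
move=> letters [[//|a s0] s0S _] h1; exists a => s sS.
apply/all_pred1P/allP => x xs /=; apply/eqP.
have first_letter y t : y :: t \in S -> [:: y] \in P.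
  by move=> /trie_nodes_S /(trie_nodes_take 1); rewrite /= take0.
have [t xtS] := letters s x sS xs.
by case: (only_child h1 (first_letter _ _ xtS) (first_letter _ _ s0S) erefl erefl).
Qed.

(* Every compact edge is determined by its lower end, which is not the root. *)
Lemma ctree_edges_bound : [::] \in K -> size (ctree_edges S) + 1 <= size K.
Proof.
move=> nilK; set E := ctree_edges S.
have memE p : p \in E -> [/\ p.1 \in K, p.2 \in K, sprefix p.1 p.2 &
     ~~ has (fun Z => sprefix p.1 Z && sprefix Z p.2) K].
  rewrite /E /ctree_edges mem_filter => /andP [/andP [sp nh]].
  by case/allpairsP => [[x y] /= [xK yK e]]; subst p; split.
have uE : uniq E.
  rewrite /E /ctree_edges; apply/filter_uniq/allpairs_uniq.
  - exact/filter_uniq/uniq_trie_nodes.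
  - exact/filter_uniq/uniq_trie_nodes.
  by move=> [? ?] [? ?] _ _ /= [-> ->].
have between X1 X2 Y : size X1 < size X2 -> take (size X1) Y = X1 -> take (size X2) Y = X2 ->
    X2 != Y -> X2 \in K -> has (fun Z => sprefix X1 Z && sprefix Z Y) K.
  move=> lt t1 t2 n2 X2K; apply/hasP; exists X2 => //.
  have e12 : take (size X1) X2 = X1 by rewrite -t2 take_takel // ltnW.
  rewrite /sprefix !prefixE e12 t2 !eqxx n2 /= andbT.
  by apply/eqP => e; move: lt; rewrite e ltnn.
have inj : {in E &, injective snd}.
  move=> [X1 Y] [X2 Y'] h1 h2 /= eY; subst Y'.
  have [X1K _ sp1 nh1] := memE _ h1; have [X2K _ sp2 nh2] := memE _ h2.
  move: sp1 sp2; rewrite /sprefix !prefixE /= => /andP [/eqP t1 n1] /andP [/eqP t2 n2].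
  case: (ltngtP (size X1) (size X2)) => c.
  - by case/negP: nh1; apply: between t1 t2 n2 X2K.
  - by case/negP: nh2; apply: between t2 t1 n1 X1K.
  - by rewrite -t1 -t2 c.
have : uniq ([::] :: map snd E).
  rewrite /= map_inj_in_uniq // uE andbT; apply/mapP => [[[X Y]]] /memE [/= _ _].
  by rewrite /sprefix prefixE => /andP [/eqP t n] _ eY; subst Y; move: t n; case: X.
move=> /(@uniq_leq_size _ _ K) /=; rewrite size_map addn1; apply=> Z.
by rewrite inE => /orP [/eqP -> //|/mapP [p /memE [_ ? _ _] ->]].
Qed.

Lemma ctree_size_bounds N : [::] \in S -> (exists2 s, s \in S & s != [::]) ->
  (forall s x, s \in S -> x \in s -> exists t, x :: t \in S) ->
  size S <= N -> 3 <= N ->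
  size K <= 2 * N - 3 /\ size (ctree_edges S) <= 2 * N - 4.
Proof.
move=> nilS neS letters sN N3.
have nilP := trie_nodes_S nilS.
have nilK : [::] \in K by rewrite mem_filter eqxx nilP.
have := ctree_edges_bound nilK; have := ctree_nodes_bound nilP.
have := trie_leaves_bound nilS neS.
case: (eqVneq (nch [::]) 1) => [h1|h1] /=; last by lia.
have [a pow] := unary_root_power letters neS h1.
have := trie_leaves_power pow; lia.
Qed.

End PrefixTrie.

Section BackwardTrie.
Variables (Sigma T : finType) (r : T) (par : T -> T) (lab : T -> Sigma).
Local Notation strb := (strb r par lab).
Local Notation Suff := (suffixes_b r par lab).

Lemma strb_fuel_letter k v x :
  x \in strb_fuel r par lab k v -> exists2 w, w != r & x = lab w.
Proof.
elim: k v => [|k IH] v //=; case: eqP => // /eqP hv.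
by rewrite inE => /orP [/eqP ->|/IH //]; exists v.
Qed.

Lemma strb_root : strb r = [::].
Proof. by rewrite /strb; case: #|T| => //= n; rewrite eqxx. Qed.

Lemma strb_nonroot v : v != r -> exists t, strb v = lab v :: t.
Proof.
move=> hv; have : 0 < #|T| by apply/card_gt0P; exists r.
by rewrite /strb; case: #|T| => //= n _; rewrite (negbTE hv); eexists.
Qed.

Lemma suffixes_bP s : reflect (exists v, s = strb v) (s \in Suff).
Proof.
rewrite /suffixes_b mem_undup; apply: (iffP mapP) => [[v _ ->]|[v ->]];
  by exists v; rewrite ?mem_enum.
Qed.

Lemma size_suffixes_b : size Suff <= #|T|.
Proof. by rewrite /suffixes_b (leq_trans (size_undup _)) // size_map -cardT. Qed.

Lemma suffixes_b_letters s x : s \in Suff -> x \in s -> exists t, x :: t \in Suff.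
Proof.
move=> /suffixes_bP [v ->] /strb_fuel_letter [w /strb_nonroot [t et] ->].
by exists t; rewrite -et; apply/suffixes_bP; exists w.
Qed.

End BackwardTrie.

Theorem theorem2 (Sigma T : finType) (r : T) (par : T -> T) (lab : T -> Sigma) :
  is_forward_trie r par lab -> 3 <= #|T| ->
  size (ctree_nodes (suffixes_b r par lab)) <= 2 * #|T| - 3 /\
  size (ctree_edges (suffixes_b r par lab)) <= 2 * #|T| - 4.
Proof.
move=> _ n3; apply: (@ctree_size_bounds _ _ #|T|); last exact: n3.
- by apply/suffixes_bP; exists r; rewrite strb_root.
- have [v0 hv0] : exists v0 : T, v0 \in predC1 r.
    by apply/card_gt0P; rewrite cardC1; lia.
  have [t e0] := strb_nonroot par lab hv0.
  by exists (strb r par lab v0); [apply/suffixes_bP; exists v0 | rewrite e0].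
- exact: suffixes_b_letters.
- exact: size_suffixes_b.
Qed.
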